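(* For every $\theta,\bar\theta\in\mathbb R^m$ there exists a stochastic policy $\mu_{\theta,\bar\theta}:\mathcal S\to\Delta_{|\mathcal A|}$ such that \[ V_\theta-V_{\bar\theta}=\Pi^{\mu_{\theta,\bar\theta}}\Phi(\theta-\bar\theta). \] Moreover, $\mu_{\theta,\bar\theta}$ can be chosen as a measurable function of $(\theta,\bar\theta)$.
   Context: Let $\mathcal S=\{1,\dots,|\mathcal S|\}$ and $\mathcal A=\{1,\dots,|\mathcal A|\}$ be finite sets. State-action vectors in $\mathbb R^{|\mathcal S||\mathcal A|}$ are ordered as $(1,1),(2,1),\dots,(|\mathcal S|,1),(1,2),\dots$. The feature matrix $\Phi\in\mathbb R^{|\mathcal S||\mathcal A|\times m}$ has rows $\phi(s,a)^\top$. For $\theta\in\mathbb R^m$, $V_\theta\in\mathbb R^{|\mathcal S|}$ is defined by $V_\theta(s)=\max_{a\in\mathcal A}\phi(s,a)^\top\theta$. A stochastic policy is a map $\mu:\mathcal S\to\Delta_{|\mathcal A|}$, where $\Delta_{|\mathcal A|}$ is the probability simplex. The matrix $\Pi^\mu\in\mathbb R^{|\mathcal S|\times|\mathcal S||\mathcal A|}$ has entry $\mu(a\mid s)$ at row $s$, column $(s,a)$, and zeros elsewhere, so $(\Pi^\mu Q)(s)=\sum_a\mu(a\mid s)Q(s,a)$. *)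

From HB Require Import structures.
From mathcomp Require Import all_boot all_order all_algebra.
From mathcomp Require Import all_classical all_reals all_analysis.
Set Implicit Arguments. Unset Strict Implicit. Unset Printing Implicit Defensive.
Import Order.TTheory GRing.Theory Num.Theory.
Local Open Scope ring_scope.

(* States S = 'I_nS, actions A = 'I_nA.+1 (nonempty, so the max in V_theta is
   defined).  State-action index of (s,a): a * nS + s (0-based), i.e. the
   ordering (1,1),(2,1),...,(|S|,1),(1,2),...  mxvec_index a s has value
   a * nS + s; we cast it to 'I_(nS * nA.+1). *)
Definition sa_idx (nS nA : nat) (s : 'I_nS) (a : 'I_nA.+1) : 'I_(nS * nA.+1) :=
  cast_ord (mulnC nA.+1 nS) (mxvec_index a s).

Definition Vth (R : realType) (nS nA m : nat) (Phi : 'M[R]_(nS * nA.+1, m))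
  (th : 'cV[R]_m) : 'cV[R]_nS :=
  \col_s \big[Num.max / (Phi *m th) (sa_idx s ord0) 0]_(a < nA.+1)
           (Phi *m th) (sa_idx s a) 0.

Definition is_policy (R : realType) (nS nA : nat) (mu : 'M[R]_(nS, nA.+1)) : Prop :=
  (forall s a, 0 <= mu s a) /\ (forall s, \sum_(a < nA.+1) mu s a = 1).

Definition PiMat (R : realType) (nS nA : nat) (mu : 'M[R]_(nS, nA.+1))
  : 'M[R]_(nS, nS * nA.+1) :=
  \matrix_(s, k) \sum_(a < nA.+1) (if k == sa_idx s a then mu s a else 0).

(* column vector of a tuple (R^m carries its Borel = product sigma-algebra
   through the measurable structure on m.-tuple R) *)
Definition tcol (R : realType) (m : nat) (t : m.-tuple R) : 'cV[R]_m :=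
  \col_i tnth t i.

From HB Require Import structures.
From mathcomp Require Import all_boot all_order all_algebra.
From mathcomp Require Import all_classical all_reals all_analysis.
From mathcomp Require Import measurable_realfun.

(* Fix a state s and put x_a := (phi(s,a)^T theta - phi(s,a)^T thetabar)
   - (V_theta(s) - V_thetabar(s)).  A greedy action for theta has x_a >= 0 and
   a greedy action for thetabar has x_a <= 0, so it suffices to find a
   probability mu on the actions with sum_a mu_a x_a = 0.  Give weight
   N = sum_b max(-x_b, 0) to each a with x_a > 0, weight P = sum_b max(x_b, 0)
   to each a with x_a < 0 and weight 1 to each a with x_a = 0: the weighted sum
   of the x_a is N P - P N = 0 and the total weight is positive, so normalizing
   gives mu.  It is built from the data by sums, maxima, comparisons and one
   inversion, hence is Borel in (theta, thetabar). *)

Import Order.TTheory GRing.Theory Num.Theory.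
Local Open Scope ring_scope.
Local Open Scope classical_set_scope.

Set Implicit Arguments.
Unset Strict Implicit.

Lemma psumr_gt0 (R : numDomainType) (I : finType) (F : I -> R) k :
  (forall i, 0 <= F i) -> 0 < F k -> 0 < \sum_i F i.
Proof.
move=> F_ge0 Fk_gt0; rewrite lt_def sumr_ge0 // andbT psumr_neq0 //.
by apply/hasP; exists k; rewrite ?mem_index_enum.
Qed.

Section BalancingWeights.
Variables (R : realFieldType) (I : finType) (x : I -> R).

Definition pos_mass := \sum_i Num.max (x i) 0.
Definition neg_mass := \sum_i Num.max (- x i) 0.

Definition balancing_weight i :=
  if 0 < x i then neg_mass else if x i < 0 then pos_mass else 1.

Definition balancing_dist i := balancing_weight i / \sum_j balancing_weight j.

Lemma pos_mass_ge0 : 0 <= pos_mass.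
Proof. by apply: sumr_ge0 => i _; rewrite le_max lexx orbT. Qed.

Lemma neg_mass_ge0 : 0 <= neg_mass.
Proof. by apply: sumr_ge0 => i _; rewrite le_max lexx orbT. Qed.

Lemma balancing_weight_ge0 i : 0 <= balancing_weight i.
Proof.
by rewrite /balancing_weight; case: ifP => _; [|case: ifP => _];
  rewrite ?neg_mass_ge0 ?pos_mass_ge0.
Qed.

Lemma balancing_weight_mulr i :
  balancing_weight i * x i =
  neg_mass * Num.max (x i) 0 - pos_mass * Num.max (- x i) 0.
Proof.
rewrite /balancing_weight; case: ltrgt0P => [xi_gt0|xi_lt0|->].
- by rewrite max_r ?oppr_le0 ?ltW // mulr0 subr0.
- by rewrite max_l ?oppr_ge0 ?ltW // mulr0 mulrN opprK add0r.
- by rewrite oppr0 maxxx !mulr0 subrr.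
Qed.

Lemma sum_balancing_weight_mulr : \sum_i balancing_weight i * x i = 0.
Proof.
under eq_bigr do rewrite balancing_weight_mulr.
by rewrite sumrB -!mulr_sumr -/pos_mass -/neg_mass mulrC subrr.
Qed.

Hypotheses (x_ge0 : exists i, 0 <= x i) (x_le0 : exists j, x j <= 0).

Lemma sum_balancing_weight_gt0 : 0 < \sum_i balancing_weight i.
Proof.
suff [k wk_gt0] : exists k, 0 < balancing_weight k.
  exact: psumr_gt0 balancing_weight_ge0 wk_gt0.
have [i xi_ge0] := x_ge0; have [j xj_le0] := x_le0.
have [xi0|xi_neq0] := eqVneq (x i) 0.
  by exists i; rewrite /balancing_weight xi0 ltxx ltr01.
have [xj0|xj_neq0] := eqVneq (x j) 0.
  by exists j; rewrite /balancing_weight xj0 ltxx ltr01.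
have xi_gt0 : 0 < x i by rewrite lt_neqAle eq_sym xi_neq0.
have xj_lt0 : x j < 0 by rewrite lt_neqAle xj_neq0.
exists j; rewrite /balancing_weight (le_gtF xj_le0) xj_lt0.
by apply: (psumr_gt0 (k := i)) => [k|]; rewrite ?le_max ?lexx ?orbT // lt_max xi_gt0.
Qed.

Lemma balancing_dist_ge0 i : 0 <= balancing_dist i.
Proof. by rewrite divr_ge0 ?balancing_weight_ge0 ?ltW ?sum_balancing_weight_gt0. Qed.

Lemma sum_balancing_dist : \sum_i balancing_dist i = 1.
Proof. by rewrite -mulr_suml divff // gt_eqF ?sum_balancing_weight_gt0. Qed.

Lemma sum_balancing_dist_mulr : \sum_i balancing_dist i * x i = 0.
Proof.
under eq_bigr do rewrite mulrAC.
by rewrite -mulr_suml sum_balancing_weight_mulr mul0r.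
Qed.

End BalancingWeights.

Lemma balancing_dist_mean (R : realFieldType) (I : finType) (d : I -> R) c :
    (exists i, 0 <= d i - c) -> (exists j, d j - c <= 0) ->
  \sum_i balancing_dist (fun i => d i - c) i * d i = c.
Proof.
move=> ge0 le0; pose W := balancing_dist (fun i => d i - c).
have -> : \sum_i W i * d i = \sum_i W i * (d i - c) + (\sum_i W i) * c.
  by rewrite mulr_suml -big_split; apply: eq_bigr => k _; rewrite /= mulrBr subrK.
by rewrite /W sum_balancing_dist_mulr // sum_balancing_dist // mul1r add0r.
Qed.

Lemma measurable_invr (R : realType) : measurable_fun [set: R] GRing.inv.
Proof.
have -> : [set: R] = [set x | x != 0] `|` [set 0].
  by apply/seteqP; split => x // _; case: (eqVneq x 0) => [->|]; [right|left].
apply/measurable_funU => //; first by apply: open_measurable; exact: open_neq.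
split; last exact: measurable_fun_set1.
apply: open_continuous_measurable_fun; first exact: open_neq.
by move=> x; rewrite inE => x0; apply: inv_continuous.
Qed.

Lemma measurable_bigmaxr (R : realType) d (T : measurableType d) (J : Type)
    (r : seq J) (F : J -> T -> R) (f0 : T -> R) :
    measurable_fun [set: T] f0 -> (forall j, measurable_fun [set: T] (F j)) ->
  measurable_fun [set: T] (fun t => \big[Num.max / f0 t]_(j <- r) F j t).
Proof.
move=> mf0 mF; elim: r => [|j r IHr]; first by under eq_fun do rewrite big_nil.
by under eq_fun do rewrite big_cons; exact: measurable_maxr.
Qed.

Lemma measurable_balancing_dist (R : realType) d (T : measurableType d)
    (I : finType) (x : I -> T -> R) :
    (forall i, measurable_fun [set: T] (x i)) ->
  forall i, measurable_fun [set: T] (fun t => balancing_dist (x ^~ t) i).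
Proof.
move=> mx i.
have mpos : measurable_fun [set: T] (fun t => pos_mass (x ^~ t)).
  by apply: measurable_sum => j; exact: measurable_maxr.
have mneg : measurable_fun [set: T] (fun t => neg_mass (x ^~ t)).
  by apply: measurable_sum => j; apply: measurable_maxr => //; exact: measurable_funN.
have mw j : measurable_fun [set: T] (fun t => balancing_weight (x ^~ t) j).
  apply: measurable_fun_ifT => //; first exact: measurable_fun_ltr.
  by apply: measurable_fun_ifT => //; exact: measurable_fun_ltr.
apply: measurable_funM => //.
exact: measurableT_comp (@measurable_invr R) (measurable_sum _ mw).
Qed.

Lemma PiMat_mulmx (R : realType) (nS nA : nat) (mu : 'M[R]_(nS, nA.+1))
    (v : 'cV[R]_(nS * nA.+1)) s :
  (PiMat mu *m v) s 0 = \sum_a mu s a * v (sa_idx s a) 0.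
Proof.
rewrite mxE; under eq_bigr do rewrite mxE mulr_suml.
rewrite exchange_big; apply: eq_bigr => a _ /=.
rewrite (bigD1 (sa_idx s a)) //= eqxx big1 ?addr0 // => k /negbTE ->.
by rewrite mul0r.
Qed.

Section PolicyDifference.
Variables (R : realType) (nS nA m : nat) (Phi : 'M[R]_(nS * nA.+1, m)).

Definition qval (th : 'cV[R]_m) s a := (Phi *m th) (sa_idx s a) 0.

Lemma VthE th s : Vth Phi th s 0 = \big[Num.max / qval th s ord0]_a qval th s a.
Proof. by rewrite mxE. Qed.

Lemma qval_le_Vth th s a : qval th s a <= Vth Phi th s 0.
Proof. by rewrite VthE; exact: le_bigmax. Qed.

Lemma Vth_attained th s : exists a, Vth Phi th s 0 = qval th s a.
Proof.
rewrite VthE; apply: (big_ind (fun v => exists a, v = qval th s a)).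
- by exists ord0.
- by move=> _ _ [a ->] [b ->]; case: leP => _; [exists b|exists a].
- by move=> a _; exists a.
Qed.

Definition qdiff th thb s a := qval th s a - qval thb s a.
Lemma qdiffE th thb s a :
  qdiff th thb s a = (Phi *m (th - thb)) (sa_idx s a) 0.
Proof. by rewrite /qdiff /qval mulmxBr !mxE. Qed.

Definition Vdiff th thb s := Vth Phi th s 0 - Vth Phi thb s 0.

Lemma exists_qdiff_ge_Vdiff th thb s :
  exists a, 0 <= qdiff th thb s a - Vdiff th thb s.
Proof.
have [a Va] := Vth_attained th s.
by exists a; rewrite subr_ge0 /Vdiff /qdiff Va lerD2l lerN2 qval_le_Vth.
Qed.

Lemma exists_qdiff_le_Vdiff th thb s :
  exists a, qdiff th thb s a - Vdiff th thb s <= 0.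
Proof.
have [a Va] := Vth_attained thb s.
by exists a; rewrite subr_le0 /Vdiff /qdiff Va lerD2r qval_le_Vth.
Qed.

#[local] Hint Resolve exists_qdiff_ge_Vdiff exists_qdiff_le_Vdiff : core.

Definition diff_policy th thb : 'M[R]_(nS, nA.+1) :=
  \matrix_(s, a) balancing_dist (fun a => qdiff th thb s a - Vdiff th thb s) a.

Lemma diff_policy_is_policy th thb : is_policy (diff_policy th thb).
Proof.
split=> s; last under eq_bigr do rewrite mxE.
- by move=> a; rewrite mxE balancing_dist_ge0.
- by rewrite sum_balancing_dist.
Qed.

Lemma Vth_sub_diff_policy th thb :
  Vth Phi th - Vth Phi thb = PiMat (diff_policy th thb) *m Phi *m (th - thb).
Proof.
apply/matrixP => s j; rewrite (ord1 j) -mulmxA PiMat_mulmx.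
under eq_bigr do rewrite mxE -qdiffE.
by rewrite balancing_dist_mean // /Vdiff !mxE.
Qed.

Lemma measurable_qval_tcol s a :
  measurable_fun [set: m.-tuple R] (fun t => qval (tcol t) s a).
Proof.
under eq_fun do rewrite /qval mxE.
apply: measurable_sum => j; apply: measurable_funM => //.
by under eq_fun do rewrite mxE; exact: measurable_tnth.
Qed.

Lemma measurable_Vth_tcol s :
  measurable_fun [set: m.-tuple R] (fun t => Vth Phi (tcol t) s 0).
Proof.
under eq_fun do rewrite VthE.
by apply: measurable_bigmaxr => *; exact: measurable_qval_tcol.
Qed.

Lemma measurable_diff_policy s a :
  measurable_fun [set: m.-tuple R * m.-tuple R]
    (fun p => diff_policy (tcol p.1) (tcol p.2) s a).
Proof.
under eq_fun do rewrite mxE.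
apply: measurable_balancing_dist => b.
apply: measurable_funB; apply: measurable_funB.
- exact: measurableT_comp (measurable_qval_tcol s b) measurable_fst.
- exact: measurableT_comp (measurable_qval_tcol s b) measurable_snd.
- exact: measurableT_comp (measurable_Vth_tcol s) measurable_fst.
- exact: measurableT_comp (measurable_Vth_tcol s) measurable_snd.
Qed.

End PolicyDifference.

Unset Implicit Arguments.

Theorem lemma3 (R : realType) (nS nA m : nat) (Phi : 'M[R]_(nS * nA.+1, m)) :
  exists mu : 'cV[R]_m -> 'cV[R]_m -> 'M[R]_(nS, nA.+1),
    (forall th thb : 'cV[R]_m,
        is_policy (mu th thb) /\
        Vth Phi th - Vth Phi thb = PiMat (mu th thb) *m Phi *m (th - thb)) /\
    (forall (s : 'I_nS) (a : 'I_nA.+1),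
        measurable_fun [set: m.-tuple R * m.-tuple R]
          (fun p : m.-tuple R * m.-tuple R => mu (tcol p.1) (tcol p.2) s a)).
Proof.
exists (diff_policy Phi); split=> [th thb|s a].
  by split; [exact: diff_policy_is_policy | exact: Vth_sub_diff_policy].
exact: measurable_diff_policy.
Qed.
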